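(* Let $\mathbb{K}$ be a field, let $A\in\mathbb{K}[x]^{m\times n}$ have full rank $m\le n$, let $s\in\mathbb{Z}^n$, let $P\in\mathbb{K}[x]^{m\times n}$ be the $s$-Popov form of $A$, and let $\pi=\rho_s(A)$ be the $s$-pivot index of $P$. Then $A_{*,\pi}\in\mathbb{K}[x]^{m\times m}$ is nonsingular, $P_{*,\pi}$ is its $s_\pi$-Popov form, and $U=P_{*,\pi}A_{*,\pi}^{-1}\in\mathbb{K}[x]^{m\times m}$ is the unique unimodular matrix such that $UA=P$. Furthermore: (i) $\deg(P)\le\deg(A)+\mathrm{amp}(s)$; (ii) for $1\le i\le m$, the $i$th column of $U$ has degree at most $|\mathrm{rdeg}(A)|-\deg(A_{i,*})$; (iii) $\deg(U)\le|\mathrm{cdeg}(A_{*,\pi})|$; (iv) $\deg(P)\le\min(|\mathrm{rdeg}(A)|,|\mathrm{cdeg}(A')|)\le m\deg(A)$, where $A'$ is $A$ with its zero columns removed.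
   Context: For a tuple $t=(t_1,\dots,t_k)$, $|t|=t_1+\dots+t_k$ and $\mathrm{amp}(t)=\max(t)-\min(t)$. $\mathrm{rdeg}(M)$ and $\mathrm{cdeg}(M)$ are the tuples of row degrees and column degrees of $M$; $\deg(M)$ is the maximum degree of its entries; $A_{i,*}$ is the $i$th row, $A_{*,J}$ the submatrix of columns indexed by the tuple $J$, and $s_J$ the corresponding subtuple of $s$. A square polynomial matrix is unimodular if it has an inverse with polynomial entries. For a shift $s\in\mathbb{Z}^n$ and a nonzero row $p=[p_1,\dots,p_n]\in\mathbb{K}[x]^{1\times n}$, the $s$-degree is $\max_j(\deg(p_j)+s_j)$, the $s$-pivot index is the largest $j$ with $\deg(p_j)+s_j$ equal to the $s$-degree, and $p_j$ is the $s$-pivot entry. A matrix $P\in\mathbb{K}[x]^{k\times n}$ is in $s$-Popov form if it has no zero row, the $s$-pivot indices of its rows are strictly increasing, its $s$-pivot entries are monic, and in each column containing an $s$-pivot entry all other entries have degree strictly less than that $s$-pivot entry. The $s$-Popov form of a matrix $A$ of rank $r$ is the unique matrix in $\mathbb{K}[x]^{r\times n}$ in $s$-Popov form whose rows generate the same $\mathbb{K}[x]$-module as those of $A$; $\rho_s(A)$, the $s$-pivot support of $A$, is the tuple of $s$-pivot indices of the rows of this form. *)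

From HB Require Import structures.
From mathcomp Require Import all_boot all_order all_algebra.
Set Implicit Arguments. Unset Strict Implicit. Unset Printing Implicit Defensive.
Import Order.TTheory GRing.Theory Num.Theory.
Local Open Scope ring_scope.

Section PopovDefs.
Variable K : fieldType.

(* degree of a polynomial; the zero polynomial gets degree 0 here, which is
   harmless below since all degrees taken are of nonzero rows/columns/matrices; comparisons involving -infinity are written with size *)
Definition pdeg (p : {poly K}) : nat := (size p).-1.

Definition deg_mx m n (M : 'M[{poly K}]_(m, n)) : nat :=
  \max_(i < m) \max_(j < n) pdeg (M i j).
Definition rdeg m n (M : 'M[{poly K}]_(m, n)) (i : 'I_m) : nat :=
  \max_(j < n) pdeg (M i j).
Definition cdeg m n (M : 'M[{poly K}]_(m, n)) (j : 'I_n) : nat :=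
  \max_(i < m) pdeg (M i j).
Definition sum_rdeg m n (M : 'M[{poly K}]_(m, n)) : nat :=
  \sum_(i < m) rdeg M i.
Definition sum_cdeg m n (M : 'M[{poly K}]_(m, n)) : nat :=
  \sum_(j < n) cdeg M j.
Definition sum_cdeg_nz m n (M : 'M[{poly K}]_(m, n)) : nat :=
  \sum_(j < n | col j M != 0) cdeg M j.

Definition is_spivot n (s : 'I_n -> int) (p : 'I_n -> {poly K}) (j : 'I_n) :=
  [/\ p j != 0,
      forall k, p k != 0 -> (pdeg (p k))%:Z + s k <= (pdeg (p j))%:Z + s j &
      forall k : 'I_n, (j < k)%N -> p k != 0 ->
        (pdeg (p k))%:Z + s k < (pdeg (p j))%:Z + s j].

Definition is_sPopov k n (s : 'I_n -> int) (P : 'M[{poly K}]_(k, n))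
    (pi : 'I_k -> 'I_n) :=
  [/\ forall i, row i P != 0,
      forall i, is_spivot s (fun j => P i j) (pi i),
      forall i i' : 'I_k, (i < i')%N -> (pi i < pi i')%N,
      forall i, P i (pi i) \is monic &
      forall i i', i' != i -> (size (P i' (pi i)) < size (P i (pi i)))%N].

Definition same_rowmod m k n (A : 'M[{poly K}]_(m, n)) (P : 'M[{poly K}]_(k, n)) :=
  (exists V : 'M[{poly K}]_(k, m), P = V *m A) /\
  (exists W : 'M[{poly K}]_(m, k), A = W *m P).

Definition sPopov_form_of m k n (s : 'I_n -> int) (A : 'M[{poly K}]_(m, n))
    (P : 'M[{poly K}]_(k, n)) :=
  (exists pi, is_sPopov s P pi) /\ same_rowmod A P.

End PopovDefs.

(* amplitude of a shift: max(s) - min(s) = max over pairs of |s_i - s_j| *)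
Definition amp n (s : 'I_n -> int) : nat :=
  \max_(i < n) \max_(j < n) `|s i - s j|%N.

Definition fracmx (K : fieldType) m n (M : 'M[{poly K}]_(m, n)) :
  'M[{fraction {poly K}}]_(m, n) := map_mx (@tofrac _) M.

(* The transformation [V] with [P = V A] is unimodular, and unique because [A] has
   full rank.  On the pivot columns, [P_pi = V A_pi] with [P_pi] column reduced: its
   diagonal entries are monic and strictly dominate their columns in degree, so
   [det P_pi] is monic of degree [delta], the sum of the pivot degrees, and so is
   [det A_pi] up to a unit; hence every entry of [P_pi] has degree at most [delta].
   Cramer's rule [det(A_pi) V = P_pi adj(A_pi)] then bounds the degrees of [V] by
   those of the cofactors of [A_pi], i.e. by sums of row or column degrees, which
   gives (ii), (iii) and, through [P = V A] (resp. [det(A_pi) P = P_pi adj(A_pi) A]),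
   (iv).  Bound (i) is the predictable degree property: in a combination [w P], the
   last row of maximal shifted degree [deg w_l + sdeg P_l] contributes the only term
   of top degree in its pivot column. *)

From HB Require Import structures.
From mathcomp Require Import all_boot all_order all_algebra fingroup perm zify.
Import Order.TTheory GRing.Theory Num.Theory.
Local Open Scope ring_scope.
Set Implicit Arguments. Unset Strict Implicit. Unset Printing Implicit Defensive.

Section PolyDegree.
Variable K : fieldType.
Implicit Types p q c : {poly K}.

Lemma pdeg0 : pdeg (0 : {poly K}) = 0%N.
Proof. by rewrite /pdeg size_poly0. Qed.

Lemma pdeg_leqE p b : (pdeg p <= b)%N = (size p <= b.+1)%N.
Proof. by rewrite /pdeg; case: (size p). Qed.

Lemma size_pdeg p : p != 0 -> size p = (pdeg p).+1.
Proof. exact: polySpred. Qed.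

Lemma leq_pdeg p q : (size p <= size q)%N -> (pdeg p <= pdeg q)%N.
Proof. by rewrite /pdeg => ?; lia. Qed.

Lemma size_signr k p : size ((-1) ^+ k * p) = size p.
Proof. by rewrite -signr_odd; case: (odd k); rewrite ?mul1r ?mulN1r ?size_polyN. Qed.

Lemma pdeg_signr k p : pdeg ((-1) ^+ k * p) = pdeg p.
Proof. by rewrite /pdeg size_signr. Qed.

Lemma pdeg_mul_le p q : (pdeg (p * q) <= pdeg p + pdeg q)%N.
Proof.
rewrite pdeg_leqE; apply: leq_trans (size_polyMleq _ _) _.
by rewrite /pdeg; case: (size p) => [|a]; case: (size q) => [|b] //=; lia.
Qed.

Lemma pdeg_mul p q : p != 0 -> q != 0 -> pdeg (p * q) = (pdeg p + pdeg q)%N.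
Proof.
by move=> p0 q0; rewrite {1}/pdeg size_mul // (size_pdeg p0) (size_pdeg q0) addnS.
Qed.

Lemma pdeg_mulKl_le c p b :
  c != 0 -> (pdeg (c * p) <= pdeg c + b)%N -> (pdeg p <= b)%N.
Proof.
move=> c0; have [->|p0] := eqVneq p 0; first by rewrite pdeg0.
by rewrite pdeg_mul // leq_add2l.
Qed.

Lemma size_sum_lt (I : Type) (r : seq I) (P : pred I) (F : I -> {poly K}) b :
  (0 < b)%N -> (forall i, P i -> (size (F i) < b)%N) ->
  (size (\sum_(i <- r | P i) F i)%R < b)%N.
Proof.
move=> b0 Fb; elim/big_ind: _ => //; first by rewrite size_poly0.
by move=> x y xb yb; apply: leq_ltn_trans (size_polyD _ _) _; rewrite gtn_max xb.
Qed.

Lemma pdeg_sum_le (I : Type) (r : seq I) (P : pred I) (F : I -> {poly K}) b :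
  (forall i, P i -> (pdeg (F i) <= b)%N) -> (pdeg (\sum_(i <- r | P i) F i)%R <= b)%N.
Proof.
by move=> Fb; rewrite pdeg_leqE -ltnS; apply: size_sum_lt => // i /Fb; rewrite pdeg_leqE ltnS.
Qed.

Lemma pdeg_prod_le (I : Type) (r : seq I) (P : pred I) (F : I -> {poly K}) :
  (pdeg (\prod_(i <- r | P i) F i)%R <= \sum_(i <- r | P i) pdeg (F i))%N.
Proof.
apply: (big_rec2 (fun x d => pdeg x <= d)%N) => [|i x d _ xd].
  by rewrite /pdeg size_poly1.
by apply: leq_trans (pdeg_mul_le _ _) _; rewrite leq_add2l.
Qed.

Lemma pdeg_prod (I : Type) (r : seq I) (P : pred I) (F : I -> {poly K}) :
  (forall i, P i -> F i != 0) ->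
  \prod_(i <- r | P i) F i != 0 /\
  pdeg (\prod_(i <- r | P i) F i) = (\sum_(i <- r | P i) pdeg (F i))%N.
Proof.
move=> F0; apply: (big_rec2 (fun x d => x != 0 /\ pdeg x = d)) => [|i x d Pi [x0 xd]].
  by rewrite oner_neq0 /pdeg size_poly1.
by rewrite mulf_neq0 ?pdeg_mul ?F0 ?xd.
Qed.

End PolyDegree.

Section MatrixDegree.
Variable K : fieldType.

Lemma pdeg_le_rdeg m n (M : 'M[{poly K}]_(m, n)) i j : (pdeg (M i j) <= rdeg M i)%N.
Proof. exact: (leq_bigmax (F := fun j => pdeg (M i j))). Qed.

Lemma pdeg_le_cdeg m n (M : 'M[{poly K}]_(m, n)) i j : (pdeg (M i j) <= cdeg M j)%N.
Proof. exact: (leq_bigmax (F := fun i => pdeg (M i j))). Qed.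

Lemma rdeg_le_deg_mx m n (M : 'M[{poly K}]_(m, n)) i : (rdeg M i <= deg_mx M)%N.
Proof. exact: (leq_bigmax (F := rdeg M)). Qed.

Lemma deg_mx_le m n (M : 'M[{poly K}]_(m, n)) b :
  (forall i j, pdeg (M i j) <= b)%N -> (deg_mx M <= b)%N.
Proof. by move=> Mb; apply/bigmax_leqP => i _; apply/bigmax_leqP => j _. Qed.

Lemma rdeg_le_sum_rdeg m n (M : 'M[{poly K}]_(m, n)) i : (rdeg M i <= sum_rdeg M)%N.
Proof. by rewrite /sum_rdeg (bigD1 i) //= leq_addr. Qed.

Lemma sum_rdeg_le_deg_mx m n (M : 'M[{poly K}]_(m, n)) : (sum_rdeg M <= m * deg_mx M)%N.
Proof.
have -> : (m * deg_mx M = \sum_(i < m) deg_mx M)%N.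
  by rewrite big_const_ord iter_addn_0 mulnC.
by apply: leq_sum => i _; apply: rdeg_le_deg_mx.
Qed.

Lemma sum_cdeg_nzE m n (M : 'M[{poly K}]_(m, n)) : sum_cdeg_nz M = sum_cdeg M.
Proof.
rewrite /sum_cdeg (bigID (fun j => col j M != 0)) /= [X in (_ = _ + X)%N]big1 ?addn0 // => j.
rewrite negbK => /eqP M0; apply: big1 => i _.
by move/matrixP: M0 => /(_ i 0); rewrite !mxE => ->; apply: pdeg0.
Qed.

Lemma rdeg_tr m n (M : 'M[{poly K}]_(m, n)) j : rdeg M^T j = cdeg M j.
Proof. by apply: eq_bigr => i _; rewrite mxE. Qed.

Lemma rdeg_colsub m n p (g : 'I_p -> 'I_n) (M : 'M[{poly K}]_(m, n)) i :
  (rdeg (colsub g M) i <= rdeg M i)%N.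
Proof. by apply/bigmax_leqP => j _; rewrite mxE pdeg_le_rdeg. Qed.

Lemma cdeg_colsub m n p (g : 'I_p -> 'I_n) (M : 'M[{poly K}]_(m, n)) j :
  cdeg (colsub g M) j = cdeg M (g j).
Proof. by apply: eq_bigr => i _; rewrite mxE. Qed.

Lemma sum_cdeg_colsub m n p (g : 'I_p -> 'I_n) (M : 'M[{poly K}]_(m, n)) :
  injective g -> sum_cdeg (colsub g M) = (\sum_(j in g @: [set: 'I_p]) cdeg M j)%N.
Proof.
move=> g_inj; rewrite big_imset /=; last by move=> a b _ _; apply: g_inj.
by apply: eq_big => [j | j _]; rewrite ?inE ?cdeg_colsub.
Qed.

Lemma pdeg_det_rdeg m (M : 'M[{poly K}]_m) : (pdeg (\det M) <= sum_rdeg M)%N.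
Proof.
apply: pdeg_sum_le => s _; rewrite pdeg_signr.
by apply: leq_trans (pdeg_prod_le _ _ _) _; apply: leq_sum => i _; apply: pdeg_le_rdeg.
Qed.

Lemma pdeg_det_cdeg m (M : 'M[{poly K}]_m) : (pdeg (\det M) <= sum_cdeg M)%N.
Proof.
rewrite -det_tr; apply: leq_trans (pdeg_det_rdeg M^T) _.
by rewrite /sum_rdeg; under eq_bigr do rewrite rdeg_tr.
Qed.

Lemma pdeg_cofactor_rdeg m (M : 'M[{poly K}]_m) i j :
  (pdeg (cofactor M i j) <= \sum_(k | k != i) rdeg M k)%N.
Proof.
rewrite expand_cofactor; apply: pdeg_sum_le => s _; rewrite pdeg_signr.
apply: leq_trans (pdeg_prod_le _ _ _) _.
rewrite (eq_bigl (fun k => k != i)) => [|k]; last by rewrite eq_sym.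
by apply: leq_sum => k _; apply: pdeg_le_rdeg.
Qed.

Lemma pdeg_cofactor_cdeg m (M : 'M[{poly K}]_m) i j :
  (pdeg (cofactor M i j) <= \sum_(k | k != j) cdeg M k)%N.
Proof.
rewrite -cofactor_tr; apply: leq_trans (pdeg_cofactor_rdeg M^T j i) _.
by under eq_bigr do rewrite rdeg_tr.
Qed.

Lemma pdeg_cofactor_le_sum_cdeg m (M : 'M[{poly K}]_m) i j :
  (pdeg (cofactor M i j) <= sum_cdeg M)%N.
Proof.
apply: leq_trans (pdeg_cofactor_cdeg M i j) _.
by rewrite /sum_cdeg [X in (_ <= X)%N](bigD1 j) //= leq_addl.
Qed.

Lemma pdeg_cramer_le k l p c (Q : 'M[{poly K}]_(k, l)) (X : 'M_(k, p)) (Y : 'M_(l, p)) b i j :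
  c != 0 -> (forall r, pdeg (Q i r) <= pdeg c)%N -> c *: X = Q *m Y ->
  (forall r, pdeg (Y r j) <= b)%N -> (pdeg (X i j) <= b)%N.
Proof.
move=> c0 Qc /matrixP /(_ i j) eXY Yb; apply: (pdeg_mulKl_le c0).
move: eXY; rewrite !mxE => ->; apply: pdeg_sum_le => r _.
by apply: leq_trans (pdeg_mul_le _ _) _; apply: leq_add.
Qed.

End MatrixDegree.

Section DominantDiagonal.
Variables (K : fieldType) (m : nat) (Q : 'M[{poly K}]_m).
Hypothesis Q_monic : forall c, Q c c \is monic.
Hypothesis Q_dom : forall r c, r != c -> (size (Q r c) < size (Q c c))%N.

Lemma pdeg_le_diag r c : (pdeg (Q r c) <= pdeg (Q c c))%N.
Proof. by have [->|rc] := eqVneq r c; last by rewrite leq_pdeg // ltnW ?Q_dom. Qed.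

Lemma size_det_term_lt (s : 'S_m) : s != 1%g ->
  (size ((-1) ^+ s * \prod_i Q i (s i))%R < size (\prod_i Q i i)%R)%N.
Proof.
move=> s1; have [diag0 diagE] := pdeg_prod (index_enum _) (P := xpredT) (F := fun i => Q i i)
  (fun i _ => monic_neq0 (Q_monic i)).
rewrite (size_pdeg diag0) diagE ltnS.
have [/forallP Qs0 | /forallPn[i0]] := boolP [forall i, Q i (s i) != 0]; last first.
  by rewrite negbK (bigD1 i0) //= => /eqP->; rewrite mul0r mulr0 size_poly0.
have [prod0 prodE] := pdeg_prod (index_enum _) (P := xpredT) (F := fun i => Q i (s i))
  (fun i _ => Qs0 i).
rewrite size_signr (size_pdeg prod0) prodE [X in (_ <= X)%N](reindex_inj (@perm_inj _ s)) /=.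
have [i0 moved] : exists i0, s i0 != i0.
  apply/existsP; apply: contraR s1 => /existsPn fixed.
  by apply/eqP/permP => i; rewrite perm1; apply/eqP/negbNE.
rewrite (bigD1 i0) //= [X in (_ <= X)%N](bigD1 i0) //= -addSn.
apply: leq_add; last by apply: leq_sum => i _; apply: pdeg_le_diag.
rewrite -ltnS -(size_pdeg (Qs0 i0)) -(size_pdeg (monic_neq0 (Q_monic _))).
by apply: Q_dom; rewrite eq_sym.
Qed.

Lemma det_dominant_diag :
  \det Q \is monic /\ pdeg (\det Q) = (\sum_c pdeg (Q c c))%N.
Proof.
have [diag0 diagE] := pdeg_prod (index_enum _) (P := xpredT) (F := fun i => Q i i)
  (fun i _ => monic_neq0 (Q_monic i)).
have detE : \det Q = \prod_i Q i i +
    \sum_(s : 'S_m | s != 1%g) (-1) ^+ s * \prod_i Q i (s i).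
  rewrite /determinant (bigD1 1%g) //= odd_perm1 expr0 mul1r.
  by congr (_ + _); apply: eq_bigr => i _; rewrite perm1.
have off_lt : (size (\sum_(s : 'S_m | s != 1%g) (-1) ^+ s * \prod_i Q i (s i))%R
                 < size (\prod_i Q i i)%R)%N.
  by apply: size_sum_lt => [|s]; [rewrite size_poly_gt0 | apply: size_det_term_lt].
rewrite detE monicE lead_coefDl // -monicE monic_prod //; split=> //.
by rewrite /pdeg size_polyDl // -/(pdeg _) diagE.
Qed.

End DominantDiagonal.

Section PredictableDegree.
Variables (K : fieldType) (m n : nat) (s : 'I_n -> int).
Variables (P : 'M[{poly K}]_(m, n)) (pi : 'I_m -> 'I_n).
Hypothesis P_piv : forall i, is_spivot s (fun j => P i j) (pi i).
Hypothesis pi_incr : forall i i' : 'I_m, (i < i')%N -> (pi i < pi i')%N.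
Variable w : 'I_m -> {poly K}.

Let sdeg_term l := (pdeg (w l))%:Z + (pdeg (P l (pi l)))%:Z + s (pi l).

Lemma pivot_term_dominant ls :
  w ls != 0 ->
  (forall l, w l != 0 -> sdeg_term l <= sdeg_term ls) ->
  (forall l, w l != 0 -> sdeg_term l = sdeg_term ls -> (l <= ls)%N) ->
  forall l, l != ls -> (size (w l * P l (pi ls))%R < size (w ls * P ls (pi ls))%R)%N.
Proof.
move=> wls0 ls_max ls_last l lls; have [Pls0 _ _] := P_piv ls.
have lead0 : w ls * P ls (pi ls) != 0 by rewrite mulf_neq0.
have [->|wl0] := eqVneq (w l) 0; first by rewrite mul0r size_poly0 size_poly_gt0.
have [->|Plj0] := eqVneq (P l (pi ls)) 0; first by rewrite mulr0 size_poly0 size_poly_gt0.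
have [_ piv_le piv_lt] := P_piv l.
have key_lt : (pdeg (w l))%:Z + (pdeg (P l (pi ls)))%:Z + s (pi ls) < sdeg_term ls.
  have [lt|ge] := ltrP (sdeg_term l) (sdeg_term ls).
    by apply: le_lt_trans lt; have := piv_le _ Plj0; rewrite /sdeg_term; lia.
  have key_eq : sdeg_term l = sdeg_term ls by apply/eqP; rewrite eq_le ls_max.
  have l_lt : (l < ls)%N by rewrite ltn_neqAle val_eqE lls ls_last.
  by have := piv_lt _ (pi_incr l_lt) Plj0; rewrite -key_eq /sdeg_term; lia.
rewrite !size_pdeg ?mulf_neq0 // !pdeg_mul // ltnS.
by move: key_lt; rewrite /sdeg_term; lia.
Qed.

Lemma predictable_degree i :
  w i != 0 ->
  exists j, (\sum_l w l * P l j) != 0 /\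
    sdeg_term i <= (pdeg (\sum_l w l * P l j))%:Z + s j.
Proof.
move=> wi0.
have [l0 wl0 l0_max] := @arg_maxP _ _ _ i (fun l => w l != 0) sdeg_term wi0.
have [|ls /andP[wls0 /eqP ls_key] ls_last] :=
  @arg_maxnP _ l0 (fun l => (w l != 0) && (sdeg_term l == sdeg_term l0)) val.
  by rewrite wl0 eqxx.
have ls_max l : w l != 0 -> sdeg_term l <= sdeg_term ls by rewrite ls_key; apply: l0_max.
have ls_lastE l : w l != 0 -> sdeg_term l = sdeg_term ls -> (l <= ls)%N.
  by rewrite ls_key => wl0' /eqP key; apply: ls_last; rewrite wl0' key.
have [Pls0 _ _] := P_piv ls.
have lead0 : w ls * P ls (pi ls) != 0 by rewrite mulf_neq0.
have sumE : size (\sum_l w l * P l (pi ls)) = size (w ls * P ls (pi ls)).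
  rewrite (bigD1 ls) //= size_polyDl //; apply: size_sum_lt; first by rewrite size_poly_gt0.
  exact: pivot_term_dominant.
exists (pi ls); rewrite -size_poly_eq0 sumE size_poly_eq0 lead0; split=> //.
rewrite /pdeg sumE -/(pdeg _) pdeg_mul //.
by have := l0_max i wi0; rewrite -ls_key /sdeg_term; lia.
Qed.

End PredictableDegree.

Lemma leq_amp n (s : 'I_n -> int) i j : (`|s i - s j|%N <= amp s)%N.
Proof.
apply: leq_trans (leq_bigmax (F := fun j => `|s i - s j|%N) j) _.
exact: (leq_bigmax (F := fun i => \max_j `|s i - s j|%N) i).
Qed.

Lemma mulmx1_col_neq0 (R : nzRingType) m (V W : 'M[R]_m) :
  V *m W = 1%:M -> forall i, exists k, W k i != 0.
Proof.
move=> /matrixP VW i; move: (VW i i); rewrite !mxE eqxx /= => VWii.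
apply/existsP; apply: contraPT VWii => /existsPn W0.
rewrite big1 => [|k _]; last by rewrite (eqP (negbNE (W0 k))) mulr0.
by move/eqP; rewrite eq_sym oner_eq0.
Qed.

Lemma deg_sPopov_le_amp (K : fieldType) m n (s : 'I_n -> int)
    (A P : 'M[{poly K}]_(m, n)) (pi : 'I_m -> 'I_n) (W : 'M[{poly K}]_m) :
  is_sPopov s P pi -> A = W *m P -> (forall i, exists k, W k i != 0) ->
  (deg_mx P <= deg_mx A + amp s)%N.
Proof.
move=> [_ P_piv pi_incr _ _] AE Wcol; apply: deg_mx_le => i j'.
have [->|Pij0] := eqVneq (P i j') 0; first by rewrite pdeg0.
have [k Wki0] := Wcol i.
have [j [_]] := predictable_degree P_piv pi_incr (w := fun l => W k l) Wki0.
have -> : \sum_l W k l * P l j = A k j by rewrite AE mxE.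
have [_ piv_le _] := P_piv i.
have := piv_le _ Pij0; have := leq_amp s j j'.
have := leq_trans (pdeg_le_rdeg A k j) (rdeg_le_deg_mx A k).
lia.
Qed.

Lemma incr_ord_inj m n (f : 'I_m -> 'I_n) :
  (forall i i' : 'I_m, (i < i')%N -> (f i < f i')%N) -> injective f.
Proof.
move=> f_incr i i' fii'; apply: val_inj.
by case: (ltngtP i i') => [/f_incr | /f_incr | //]; rewrite fii' ltnn.
Qed.

Lemma fracmx_rank_mulmx_inj (K : fieldType) k m n (A : 'M[{poly K}]_(m, n))
    (X Y : 'M[{poly K}]_(k, m)) :
  \rank (fracmx A) = m -> X *m A = Y *m A -> X = Y.
Proof.
move=> A_rank XYA; have A_free : row_free (fracmx A) by rewrite /row_free A_rank.
have /(row_free_inj A_free)/matrixP XY : fracmx X *m fracmx A = fracmx Y *m fracmx A.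
  by rewrite /fracmx -!map_mxM XYA.
by apply/matrixP => i j; move: (XY i j); rewrite !mxE => /eqP; rewrite tofrac_eq => /eqP.
Qed.

Section PivotColumns.
Variables (K : fieldType) (m n : nat) (s : 'I_n -> int).
Variables (P : 'M[{poly K}]_(m, n)) (pi : 'I_m -> 'I_n).
Hypothesis P_popov : is_sPopov s P pi.
Local Notation Ppi := (colsub pi P).

Lemma colsub_pivots_monic c : Ppi c c \is monic.
Proof. by rewrite mxE; case: P_popov. Qed.

Lemma colsub_pivots_dominant r c : r != c -> (size (Ppi r c) < size (Ppi c c))%N.
Proof. by rewrite !mxE; case: P_popov => _ _ _ _; apply. Qed.

Lemma colsub_sPopov : is_sPopov (fun c => s (pi c)) Ppi (fun c => c).
Proof.
case: P_popov => _ P_piv pi_incr _ _; split=> // [i | i | i | i i'].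
- apply: contraTneq (monic_neq0 (colsub_pivots_monic i)) => /matrixP/(_ 0 i).
  by rewrite !mxE => ->; rewrite eqxx.
- have [Pii0 piv_le piv_lt] := P_piv i.
  by split=> [|k|k /pi_incr]; rewrite ?mxE //; [apply: piv_le | apply: piv_lt].
- exact: colsub_pivots_monic.
- exact: colsub_pivots_dominant.
Qed.

Lemma det_colsub_pivots :
  \det Ppi \is monic /\ pdeg (\det Ppi) = (\sum_c pdeg (Ppi c c))%N.
Proof. exact: det_dominant_diag colsub_pivots_monic colsub_pivots_dominant. Qed.

End PivotColumns.

Section UnimodularTransform.
Variables (K : fieldType) (m n : nat) (s : 'I_n -> int).
Variables (A P : 'M[{poly K}]_(m, n)) (pi : 'I_m -> 'I_n) (V : 'M[{poly K}]_m).
Hypothesis P_popov : is_sPopov s P pi.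
Hypothesis PE : P = V *m A.
Hypothesis V_unit : V \in unitmx.
Local Notation Api := (colsub pi A).
Local Notation Ppi := (colsub pi P).

Lemma colsub_transform : Ppi = V *m Api.
Proof. by rewrite PE mulmx_colsub. Qed.

Lemma det_colsub_neq0 : \det Api != 0.
Proof.
have [detP_monic _] := det_colsub_pivots P_popov.
apply: contraTneq (monic_neq0 detP_monic) => detA0.
by rewrite colsub_transform det_mulmx detA0 mulr0 eqxx.
Qed.

Lemma pdeg_det_colsub : pdeg (\det Api) = pdeg (\det Ppi).
Proof.
have detV_unit : \det V \is a GRing.unit by rewrite -unitmxE.
have detV0 : \det V != 0 by apply: contraTneq detV_unit => ->; rewrite unitr0.
rewrite colsub_transform det_mulmx pdeg_mul ?det_colsub_neq0 //.
by move: detV_unit; rewrite poly_unitE /pdeg => /andP[/eqP-> _].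
Qed.

Lemma pdeg_colsub_le_det k c : (pdeg (Ppi k c) <= pdeg (\det Api))%N.
Proof.
have [_ detPE] := det_colsub_pivots P_popov.
apply: leq_trans (pdeg_le_diag (colsub_pivots_dominant P_popov) k c) _.
by rewrite pdeg_det_colsub detPE (bigD1 c) //= leq_addr.
Qed.

Lemma scale_det_transform : \det Api *: V = Ppi *m \adj Api.
Proof. by rewrite colsub_transform -mulmxA mul_mx_adj mul_mx_scalar. Qed.

Lemma pdeg_transform_le_rdeg k i : (pdeg (V k i) <= sum_rdeg A - rdeg A i)%N.
Proof.
apply: (pdeg_cramer_le det_colsub_neq0 _ scale_det_transform) => [r | l].
  exact: pdeg_colsub_le_det.
rewrite mxE; apply: leq_trans (pdeg_cofactor_rdeg _ i l) _.
rewrite /sum_rdeg [X in (_ <= X - _)%N](bigD1 i) //= addKn.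
by apply: leq_sum => r _; apply: rdeg_colsub.
Qed.

Lemma pdeg_transform_le_cdeg k i : (pdeg (V k i) <= sum_cdeg Api)%N.
Proof.
apply: (pdeg_cramer_le det_colsub_neq0 _ scale_det_transform) => [r | l].
  exact: pdeg_colsub_le_det.
by rewrite mxE; apply: pdeg_cofactor_le_sum_cdeg.
Qed.

Lemma deg_sPopov_le_sum_rdeg : (deg_mx P <= sum_rdeg A)%N.
Proof.
apply: deg_mx_le => k j; rewrite PE mxE; apply: pdeg_sum_le => i _.
apply: leq_trans (pdeg_mul_le _ _) _.
by rewrite -(subnK (rdeg_le_sum_rdeg A i)) leq_add ?pdeg_transform_le_rdeg ?pdeg_le_rdeg.
Qed.

(* A non-pivot column [j] is bounded through Cramer's rule applied to
   [det Api P = Ppi (adj Api A)], which adds the single column degree of [j]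
   to those of the pivot columns. *)
Lemma deg_sPopov_le_sum_cdeg : (deg_mx P <= sum_cdeg A)%N.
Proof.
have pi_inj : injective pi by case: P_popov => _ _ /incr_ord_inj.
have sum_le (S : {set 'I_n}) : (\sum_(j in S) cdeg A j <= sum_cdeg A)%N.
  by rewrite /sum_cdeg [X in (_ <= X)%N](bigID (mem S)) /= leq_addr.
apply: deg_mx_le => k j.
have [c /eqP <- | not_pivot] := pickP (fun c => pi c == j).
  have := pdeg_colsub_le_det k c; rewrite mxE => /leq_trans; apply.
  by apply: leq_trans (pdeg_det_cdeg _) _; rewrite sum_cdeg_colsub.
have scale_det_P : \det Api *: P = Ppi *m (\adj Api *m A).
  by rewrite {1}PE scalemxAl scale_det_transform mulmxA.
apply: leq_trans (pdeg_cramer_le (b := (sum_cdeg Api + cdeg A j)%N)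
                    det_colsub_neq0 (pdeg_colsub_le_det k) scale_det_P _) _.
  move=> l; rewrite mxE; apply: pdeg_sum_le => i _.
  apply: leq_trans (pdeg_mul_le _ _) _.
  by rewrite mxE leq_add ?pdeg_cofactor_le_sum_cdeg ?pdeg_le_cdeg.
rewrite sum_cdeg_colsub // addnC -big_setU1 /=; first exact: sum_le.
by apply/imsetP => -[c _ jE]; move: (not_pivot c); rewrite -jE eqxx.
Qed.

End UnimodularTransform.

Theorem lemma5p1 (K : fieldType) (m n : nat) (A : 'M[{poly K}]_(m, n))
    (s : 'I_n -> int) (P : 'M[{poly K}]_(m, n)) (pi : 'I_m -> 'I_n) :
  (m <= n)%N ->
  \rank (fracmx A) = m ->
  is_sPopov s P pi ->
  same_rowmod A P ->
  [/\ \det (colsub pi A) != 0,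
      sPopov_form_of (fun j => s (pi j)) (colsub pi A) (colsub pi P),
      exists U : 'M[{poly K}]_m,
        [/\ fracmx U = fracmx (colsub pi P) *m invmx (fracmx (colsub pi A)),
            (U \in unitmx /\ U *m A = P),
            forall V : 'M[{poly K}]_m, V \in unitmx -> V *m A = P -> V = U,
            forall i : 'I_m, (cdeg U i <= sum_rdeg A - rdeg A i)%N &
            (deg_mx U <= sum_cdeg (colsub pi A))%N],
      (deg_mx P <= deg_mx A + amp s)%N &
      (deg_mx P <= minn (sum_rdeg A) (sum_cdeg_nz A))%N /\
      (minn (sum_rdeg A) (sum_cdeg_nz A) <= m * deg_mx A)%N].
Proof.
move=> _ A_rank P_popov [[V PE] [W AE]].
have A_inj := fracmx_rank_mulmx_inj (k := m) A_rank.
have WV : W *m V = 1%:M by apply: A_inj; rewrite -mulmxA -PE -AE mul1mx.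
have VW := mulmx1C WV; have [V_unit _] := mulmx1_unit VW.
have detA0 := det_colsub_neq0 P_popov PE.
split=> //.
- split; first by exists id; apply: colsub_sPopov.
  by split; [exists V; rewrite PE | exists W; rewrite {1}AE]; rewrite mulmx_colsub.
- exists V; split=> //.
  + rewrite (colsub_transform pi PE) /fracmx map_mxM mulmxK //.
    by rewrite unitmxE det_map_mx unitfE tofrac_eq0.
  + by move=> V' _ V'E; apply: A_inj; rewrite V'E PE.
  + by move=> i; apply/bigmax_leqP => k _; apply: (pdeg_transform_le_rdeg P_popov PE V_unit).
  + by apply: deg_mx_le; apply: (pdeg_transform_le_cdeg P_popov PE V_unit).
- exact: deg_sPopov_le_amp P_popov AE (mulmx1_col_neq0 VW).
- rewrite leq_min (deg_sPopov_le_sum_rdeg P_popov PE V_unit) sum_cdeg_nzE.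
  rewrite (deg_sPopov_le_sum_cdeg P_popov PE V_unit).
  by split=> //; apply: leq_trans (geq_minl _ _) (sum_rdeg_le_deg_mx A).
Qed.
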